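(* There is a universal constant $c>0$ such that for all sufficiently large $T$ and every (possibly randomized) forecasting algorithm $\mathcal{A}$ the following holds. Run $\mathcal{A}$ for $T$ steps on outcomes $x_1,\ldots,x_T$ that are independent $\mathrm{Bernoulli}(1/2)$ bits, and let $S_t = \sum_{t'=1}^t (x_{t'} - p_{t'})$ for $t \in [T]$. Then at least one of the following holds: $\Pr[\max_{t \in [T]} |S_t| \ge c\,T^{1/3}] \ge c$, or $\mathbb{E}[\mathsf{smCE}(x,p)] \ge c\,T^{1/3}$, where probability and expectation are over the random bits and the randomness of $\mathcal{A}$.
   Context: A forecasting algorithm chooses each prediction $p_t \in [0,1]$ as a (possibly randomized) function of $x_1,\ldots,x_{t-1}, p_1,\ldots,p_{t-1}$, before $x_t$ is revealed. $\mathsf{smCE}(x,p) = \sup_{f \in \mathcal{F}} \sum_{t=1}^T f(p_t)(x_t - p_t)$, where $\mathcal{F}$ is the family of $1$-Lipschitz functions from $[0,1]$ to $[-1,1]$. *)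

From HB Require Import structures.
From mathcomp Require Import all_boot all_order all_algebra.
From mathcomp Require Import all_classical all_reals all_analysis.
Set Implicit Arguments. Unset Strict Implicit. Unset Printing Implicit Defensive.
Import Order.TTheory GRing.Theory Num.Theory.
Local Open Scope ring_scope.

(* The family F: 1-Lipschitz functions [0,1] -> [-1,1]
   (represented as functions R -> R; only values on [0,1] matter). *)
Definition lip_family (R : realType) (f : R -> R) : Prop :=
  (forall u v : R, 0 <= u <= 1 -> 0 <= v <= 1 -> `|f u - f v| <= `|u - v|) /\
  (forall u : R, 0 <= u <= 1 -> `|f u| <= 1).

Definition smCE (R : realType) (T : nat) (x p : 'I_T -> R) : R :=
  sup [set s : R | exists f : R -> R, lip_family f /\
                     s = \sum_(t < T) f (p t) * (x t - p t)].

(* A (possibly randomized) forecaster with random tape w in Omega: the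
   prediction at time t is alg w [:: x_1; ...; x_{t}] (prefix of length t
   of past outcomes).  Past predictions are themselves functions of w and the
   past outcomes, so they need not be passed explicitly. *)
Definition prediction (Omega : Type) (R : realType) (T : nat)
  (alg : Omega -> seq bool -> R) (x : {ffun 'I_T -> bool}) (w : Omega)
  (t : 'I_T) : R :=
  alg w (map x (take t (enum 'I_T))).

Definition outcome (R : realType) (T : nat) (x : {ffun 'I_T -> bool})
  (t : 'I_T) : R := (x t)%:R.

(* S_{t+1} = sum_{t' <= t} (x_{t'} - p_{t'})  (0-indexed t) *)
Definition partial_bias (R : realType) (T : nat) (x p : 'I_T -> R)
  (t : 'I_T) : R := \sum_(i < T | (i <= t)%N) (x i - p i).

(* Fix the forecaster's random tape, so that p_t is a function of x_1, ..., x_(t-1), and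
   split x_t - p_t = (x_t - 1/2) - (p_t - 1/2).  Stop the walk S as soon as |S_t| reaches
   del = T^(1/3)/32 and let a_t be the indicator that it has not stopped before t.  On a block
   of L consecutive rounds the stopped noise sum_t a_t (x_t - 1/2) is a martingale, so its
   second moment is E[sum_t a_t]/4 >= (L/4) Pr[never stopped].  It is also the sum of a
   stopped increment of S, bounded by 2 (del + 1), and sum_t a_t (p_t - 1/2), whose square is
   at most L sum_t (p_t - 1/2)^2 by Cauchy-Schwarz.  Summing over n ~ T^(1/3) disjoint blocks
   of length L ~ T^(2/3) gives E sum_t (p_t - 1/2)^2 >~ T^(1/3) unless the walk stops with
   constant probability.  Finally E sum_t (p_t - 1/2)^2 = E sum_t (1/2 - p_t)(x_t - p_t), the
   correlation of the 1-Lipschitz test u |-> 1/2 - u, which is at most E smCE. *)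

From HB Require Import structures.
From mathcomp Require Import all_boot all_order all_algebra.
From mathcomp Require Import all_classical all_reals all_analysis.
From mathcomp Require Import measurable_realfun ring lra.
Import Order.TTheory GRing.Theory Num.Theory.
Local Open Scope ring_scope.
Local Open Scope classical_set_scope.

Set Implicit Arguments. Unset Strict Implicit. Unset Printing Implicit Defensive.

Definition bit (R : realType) (s : seq bool) (t : nat) : R := (nth false s t)%:R.

Definition noise (R : realType) (s : seq bool) (t : nat) : R := bit R s t - 2^-1.

Lemma bit_take (R : realType) s t u : (u < t)%N -> bit R (take t s) u = bit R s u.
Proof. by move=> ut; rewrite /bit nth_take. Qed.

Lemma noise_sqr (R : realType) s t : noise R s t ^+ 2 = 4^-1.
Proof. by rewrite /noise /bit; case: (nth false s t) => /=; field. Qed.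

Lemma nth_codom_ord T (x : {ffun 'I_T -> bool}) (i : 'I_T) : nth false (codom x) i = x i.
Proof. by rewrite codomE (nth_map i) ?size_enum_ord // nth_ord_enum. Qed.

Lemma card_bool_cube T : #|{ffun 'I_T -> bool}| = (2 ^ T)%N.
Proof. by rewrite card_ffun card_bool card_ord. Qed.

Lemma natr_bool_sqr (R : numDomainType) (b : bool) : (b%:R : R) ^+ 2 = b%:R.
Proof. by case: b; rewrite ?expr0n ?expr1n. Qed.

Lemma take_codom_eq T t (x y : {ffun 'I_T -> bool}) :
  (forall j : 'I_T, (j < t)%N -> x j = y j) -> take t (codom x) = take t (codom y).
Proof.
move=> xy; apply: (@eq_from_nth _ false) => [|i]; first by rewrite !size_take_min !size_codom.
rewrite size_take_min size_codom card_ord leq_min => /andP[it iT].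
by rewrite !nth_take // -[i]/(val (Ordinal iT)) !nth_codom_ord xy.
Qed.

(* Flipping bit [t] is an involution of the cube that fixes [G] and negates the noise at [t]. *)
Lemma sum_causal_mul_noise (R : realType) T t (G : seq bool -> R) : (t < T)%N ->
  (forall s, G s = G (take t s)) ->
  \sum_(x : {ffun 'I_T -> bool}) G (codom x) * noise R (codom x) t = 0.
Proof.
move=> tT causalG; set i := Ordinal tT.
pose flip (x : {ffun 'I_T -> bool}) := [ffun j => if j == i then ~~ x j else x j].
have flipK : involutive flip.
  by move=> x; apply/ffunP => j; rewrite !ffunE; case: eqP => // _; rewrite negbK.
have take_flip x : take t (codom (flip x)) = take t (codom x).
  by apply: take_codom_eq => j jt; rewrite ffunE ifN //; apply: contraTneq jt => ->; rewrite ltnn.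
have noise_flip x : noise R (codom (flip x)) t = - noise R (codom x) t.
  by rewrite /noise /bit -[t]/(val i) !nth_codom_ord ffunE eqxx; case: (x i) => /=; lra.
set S := \sum_x _; suff : S = - S by lra.
rewrite {1}/S (reindex_inj (inv_inj flipK)) -sumrN; apply: eq_bigr => x _.
by rewrite causalG take_flip -causalG noise_flip mulrN.
Qed.

Lemma sum_sqr_causal_noise (R : realType) T (a : seq bool -> nat -> R) lo L :
  (lo + L <= T)%N -> (forall s t, a s t = a (take t s) t) ->
  \sum_(x : {ffun 'I_T -> bool})
     (\sum_(lo <= t < lo + L) a (codom x) t * noise R (codom x) t) ^+ 2 =
  \sum_(x : {ffun 'I_T -> bool}) \sum_(lo <= t < lo + L) a (codom x) t ^+ 2 / 4.
Proof.
move=> + causal_a; elim: L => [|L IH] hT.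
  by apply: eq_bigr => x _; rewrite addn0 !big_geq // expr0n.
rewrite addnS in hT *; set t := (lo + L)%N in hT IH *.
pose M s := \sum_(lo <= u < t) a s u * noise R s u.
have M_causal s : M s = M (take t s).
  apply: eq_big_nat => u /andP[_ ut].
  by rewrite /noise bit_take // [in RHS]causal_a take_takel ?(ltnW ut) // -causal_a.
have a_causal s : 2 * M s * a s t = 2 * M (take t s) * a (take t s) t.
  by rewrite -M_causal -causal_a.
transitivity (\sum_(x : {ffun 'I_T -> bool})
   (M (codom x) ^+ 2 + a (codom x) t ^+ 2 / 4 +
    2 * M (codom x) * a (codom x) t * noise R (codom x) t)).
  apply: eq_bigr => x _; rewrite big_nat_recr ?leq_addr //=.
  by rewrite sqrrD exprMn noise_sqr /M /=; ring.
rewrite big_split /= (@sum_causal_mul_noise R T t (fun s => 2 * M s * a s t) hT a_causal).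
rewrite addr0 big_split /= /M (IH (ltnW hT)) -big_split.
by apply: eq_bigr => x _; rewrite [in RHS]big_nat_recr ?leq_addr.
Qed.

Lemma sqr_sum_le (R : realFieldType) (m n : nat) (u : nat -> R) :
  (\sum_(m <= i < n) u i) ^+ 2 <= (n - m)%:R * \sum_(m <= i < n) u i ^+ 2.
Proof.
have am_gm i j : 2 * (u i * u j) <= u i ^+ 2 + u j ^+ 2.
  by have := sqr_ge0 (u i - u j); lra.
rewrite -(@ler_pM2l _ 2) // expr2 big_distrlr /= mulr_sumr.
apply: (@le_trans _ _ (\sum_(m <= i < n) \sum_(m <= j < n) (u i ^+ 2 + u j ^+ 2))).
  by apply: ler_sum => i _; rewrite mulr_sumr; apply: ler_sum => j _.
rewrite (eq_bigr (fun i => u i ^+ 2 *+ (n - m) + \sum_(m <= j < n) u j ^+ 2)).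
  by rewrite big_split /= sumr_const_nat sumrMnl -mulr2n !mulr_natl.
by move=> i _; rewrite big_split /= sumr_const_nat.
Qed.

Section Forecaster.
Variables (R : realType) (f : seq bool -> R).

Definition forecast s t : R := f (take t s).

Definition residual s t : R := bit R s t - forecast s t.

Definition bias s j : R := \sum_(0 <= t < j) residual s t.

Definition unstopped (del : R) s t : bool :=
  all (fun j => `|bias s j.+1| < del) (iota 0 t).

Definition witness_gain T s : R :=
  \sum_(0 <= t < T) (2^-1 - forecast s t) * residual s t.

Lemma forecast_take s t u : (u <= t)%N -> forecast (take t s) u = forecast s u.
Proof. by move=> ut; rewrite /forecast take_takel. Qed.

Lemma residual_take s t u : (u < t)%N -> residual (take t s) u = residual s u.
Proof. by move=> ut; rewrite /residual bit_take // forecast_take // ltnW. Qed.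

Lemma bias_take s t j : (j <= t)%N -> bias (take t s) j = bias s j.
Proof.
by move=> jt; apply: eq_big_nat => u /andP[_ uj]; rewrite residual_take // (leq_trans uj jt).
Qed.

Lemma unstopped_take del s t u :
  (u <= t)%N -> unstopped del (take t s) u = unstopped del s u.
Proof.
move=> ut; apply: eq_in_all => j; rewrite mem_iota add0n => /andP[_ ju].
by rewrite bias_take // (leq_trans ju ut).
Qed.

Lemma unstoppedS del s t :
  unstopped del s t.+1 = unstopped del s t && (`|bias s t.+1| < del).
Proof. by rewrite /unstopped -[in iota 0 t.+1]addn1 iotaD all_cat /= add0n andbT. Qed.

Lemma unstopped_le del s t u : (t <= u)%N -> unstopped del s u -> unstopped del s t.
Proof. by move=> tu; rewrite /unstopped -(subnKC tu) iotaD all_cat => /andP[]. Qed.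

Lemma bias_unstopped del s t : 0 <= del -> unstopped del s t -> `|bias s t| <= del.
Proof.
case: t => [del0 _|t _]; first by rewrite /bias big_geq ?normr0.
by rewrite unstoppedS => /andP[_ /ltW].
Qed.

Lemma sum_witness_gain T :
  \sum_(x : {ffun 'I_T -> bool}) witness_gain T (codom x) =
  \sum_(x : {ffun 'I_T -> bool}) \sum_(0 <= t < T) (forecast (codom x) t - 2^-1) ^+ 2.
Proof.
rewrite exchange_big [RHS]exchange_big /=; apply: eq_big_nat => t /andP[_ tT].
transitivity (\sum_(x : {ffun 'I_T -> bool})
  ((forecast (codom x) t - 2^-1) ^+ 2 -
   (forecast (codom x) t - 2^-1) * noise R (codom x) t)).
  by apply: eq_bigr => x _; rewrite /residual /noise; ring.
rewrite sumrB (@sum_causal_mul_noise R T t (fun s => forecast s t - 2^-1)) ?subr0 //.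
by move=> s; rewrite forecast_take.
Qed.

Hypothesis f01 : forall s, 0 <= f s <= 1.

Lemma residual_bounded s t : `|residual s t| <= 1.
Proof.
have /andP[f0 f1] := f01 (take t s).
by rewrite /residual /forecast /bit ler_norml; case: (nth false s t) => /=; lra.
Qed.

(* Until the walk stops the stopped sum is the bias itself; afterwards it stays frozen
   one step past the last time |bias| < del held. *)
Lemma stopped_bias_bounded del s j : 0 <= del ->
  `|\sum_(0 <= t < j) (unstopped del s t)%:R * residual s t| <= del + 1.
Proof.
move=> del0.
suff [] : (unstopped del s j ->
            \sum_(0 <= t < j) (unstopped del s t)%:R * residual s t = bias s j) /\
          `|\sum_(0 <= t < j) (unstopped del s t)%:R * residual s t| <= del + 1 by [].
elim: j => [|j [IHeq IHle]].
  by rewrite big_geq // normr0 /bias big_geq //; split => //; lra.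
rewrite big_nat_recr //=; split.
  by rewrite unstoppedS => /andP[uj _]; rewrite IHeq // uj mul1r /bias [in RHS]big_nat_recr.
case uj: (unstopped del s j); rewrite ?mul1r ?mul0r ?addr0 //.
rewrite IHeq //; apply: le_trans (ler_normD _ _) _.
by apply: lerD; [exact: bias_unstopped | exact: residual_bounded].
Qed.

Lemma stopped_block_bounded del s lo hi : 0 <= del -> (lo <= hi)%N ->
  `|\sum_(lo <= t < hi) (unstopped del s t)%:R * residual s t| <= 2 * (del + 1).
Proof.
move=> del0 lohi.
have := stopped_bias_bounded s lo del0; have := stopped_bias_bounded s hi del0.
rewrite (@big_cat_nat _ _ _ lo 0 hi) //=.
set A := \sum_(0 <= t < lo) _; set B := \sum_(lo <= t < hi) _ => hAB hA.
rewrite -(addKr A B); apply: le_trans (ler_normD _ _) _; rewrite normrN; lra.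
Qed.

Lemma block_unstopped_le del T lo L : 0 <= del -> (lo + L <= T)%N ->
  L%:R / 4 * \sum_(x : {ffun 'I_T -> bool}) (unstopped del (codom x) T)%:R <=
  8 * (del + 1) ^+ 2 * (2 ^ T)%:R +
  2 * L%:R * \sum_(x : {ffun 'I_T -> bool})
                \sum_(lo <= t < lo + L) (forecast (codom x) t - 2^-1) ^+ 2.
Proof.
move=> del0 hT; pose a s t : R := (unstopped del s t)%:R.
have a_causal s t : a s t = a (take t s) t by rewrite /a unstopped_take.
apply: (@le_trans _ _ (\sum_(x : {ffun 'I_T -> bool})
                        \sum_(lo <= t < lo + L) a (codom x) t ^+ 2 / 4)).
  rewrite mulr_sumr; apply: ler_sum => x _.
  have -> : L%:R / 4 * a (codom x) T = \sum_(lo <= t < lo + L) a (codom x) T / 4.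
    by rewrite sumr_const_nat addKn -[RHS]mulr_natl; ring.
  apply: ler_sum_nat => t /andP[_ tL]; rewrite /a natr_bool_sqr ler_pM2r //.
  have := @unstopped_le del (codom x) t T (leq_trans (ltnW tL) hT).
  by case: (unstopped del (codom x) T) => [->|] //=; rewrite ler0n.
rewrite -(sum_sqr_causal_noise hT a_causal).
have -> : 8 * (del + 1) ^+ 2 * (2 ^ T)%:R =
          \sum_(x : {ffun 'I_T -> bool}) 8 * (del + 1) ^+ 2.
  by rewrite sumr_const card_bool_cube mulr_natr.
rewrite mulr_sumr -big_split /=.
apply: ler_sum => x _.
set S := \sum_(lo <= t < lo + L) a (codom x) t * residual (codom x) t.
set Q := \sum_(lo <= t < lo + L) a (codom x) t * (forecast (codom x) t - 2^-1).
have -> : \sum_(lo <= t < lo + L) a (codom x) t * noise R (codom x) t = S + Q.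
  by rewrite -big_split /=; apply: eq_bigr => t _; rewrite /noise /residual; ring.
have S_bound : S ^+ 2 <= 4 * (del + 1) ^+ 2.
  have := stopped_block_bounded (codom x) del0 (leq_addr L lo).
  by rewrite ler_norml -/S => /andP[S_lb S_ub]; nra.
have Q_bound : Q ^+ 2 <= L%:R * \sum_(lo <= t < lo + L) (forecast (codom x) t - 2^-1) ^+ 2.
  apply: le_trans (sqr_sum_le _ _ _) _; rewrite addKn ler_wpM2l // ler_sum // => t _.
  by rewrite exprMn /a natr_bool_sqr ler_piMl ?sqr_ge0 // lern1 leq_b1.
have := sqr_ge0 (S - Q); nra.
Qed.

Lemma unstopped_witness_tradeoff del T n L : 0 <= del -> (n * L <= T)%N ->
  n%:R * L%:R / 4 * \sum_(x : {ffun 'I_T -> bool}) (unstopped del (codom x) T)%:R <=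
  n%:R * (8 * (del + 1) ^+ 2 * (2 ^ T)%:R) +
  2 * L%:R * \sum_(x : {ffun 'I_T -> bool}) witness_gain T (codom x).
Proof.
move=> del0 nLT; rewrite sum_witness_gain.
pose D m :=
  \sum_(x : {ffun 'I_T -> bool}) \sum_(0 <= t < m) (forecast (codom x) t - 2^-1) ^+ 2.
have D_ge0 m : 0 <= D m.
  by apply: sumr_ge0 => x _; apply: sumr_ge0 => t _; exact: sqr_ge0.
have D_split m k : (m <= k)%N -> D k = D m +
    \sum_(x : {ffun 'I_T -> bool}) \sum_(m <= t < k) (forecast (codom x) t - 2^-1) ^+ 2.
  move=> mk; rewrite /D -big_split; apply: eq_bigr => x _.
  by rewrite (@big_cat_nat _ _ _ m 0 k).
suff blocks :
    n%:R * L%:R / 4 * \sum_(x : {ffun 'I_T -> bool}) (unstopped del (codom x) T)%:R <=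
    n%:R * (8 * (del + 1) ^+ 2 * (2 ^ T)%:R) + 2 * L%:R * D (n * L)%N.
  apply: le_trans blocks _; rewrite lerD2l ler_wpM2l ?mulr_ge0 // -[X in _ <= X]/(D T).
  rewrite (D_split _ _ nLT) lerDl.
  by apply: sumr_ge0 => x _; apply: sumr_ge0 => t _; exact: sqr_ge0.
elim: n nLT => [|n IH] hT.
  by rewrite !mul0r add0r mulr_ge0 ?mulr_ge0 ?D_ge0.
rewrite mulSnr in hT *; rewrite (D_split (n * L)%N) ?leq_addr // mulrSr.
have := block_unstopped_le (lo := (n * L)%N) del0 hT.
have := IH (leq_trans (leq_addr L _) hT).
lra.
Qed.

End Forecaster.

Lemma prediction_forecast (Omega : Type) (R : realType) T (alg : Omega -> seq bool -> R)
    (x : {ffun 'I_T -> bool}) w (t : 'I_T) :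
  prediction alg x w t = forecast (alg w) (codom x) t.
Proof. by rewrite /prediction /forecast /codom /image_mem map_take. Qed.

Lemma outcome_bit (R : realType) T (x : {ffun 'I_T -> bool}) (t : 'I_T) :
  outcome R x t = bit R (codom x) t.
Proof. by rewrite /outcome /bit nth_codom_ord. Qed.

Lemma partial_bias_bias (Omega : Type) (R : realType) T (alg : Omega -> seq bool -> R)
    (x : {ffun 'I_T -> bool}) w (t : 'I_T) :
  partial_bias (outcome R x) (prediction alg x w) t = bias (alg w) (codom x) t.+1.
Proof.
rewrite /partial_bias /bias (big_nat_widen _ _ _ _ _ (ltn_ord t)) big_mkord.
by apply: eq_big => [i|i _]; rewrite ?outcome_bit ?prediction_forecast.
Qed.

Lemma smCE_ge (R : realType) T (x p : 'I_T -> R) (g : R -> R) :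
  (forall t, 0 <= p t <= 1) -> (forall t, `|x t - p t| <= 1) -> lip_family g ->
  \sum_(t < T) g (p t) * (x t - p t) <= smCE x p.
Proof.
move=> p01 xp1 gF; apply: sup_upper_bound; last by exists g.
split; first by exists (\sum_(t < T) g (p t) * (x t - p t)), g.
exists T%:R => _ [h [[_ h1] ->]].
apply: (@le_trans _ _ (\sum_(t < T) (1 : R))); last by rewrite sumr_const card_ord.
apply: ler_sum => t _; apply: le_trans (ler_norm _) _.
by rewrite normrM -[1](mulr1 1) ler_pM // h1.
Qed.

Section RandomForecaster.
Variables (Omega : Type) (R : realType) (alg : Omega -> seq bool -> R).
Hypothesis alg01 : forall w s, 0 <= alg w s <= 1.

Lemma prediction_outcome_bounded T (x : {ffun 'I_T -> bool}) w :
  (forall t, 0 <= prediction alg x w t <= 1) /\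
  (forall t, `|outcome R x t - prediction alg x w t| <= 1).
Proof.
split=> t; first exact: alg01.
by rewrite outcome_bit prediction_forecast; exact: residual_bounded.
Qed.

Lemma smCE_ge0 T (x : {ffun 'I_T -> bool}) w :
  0 <= smCE (outcome R x) (prediction alg x w).
Proof.
have [p01 xp1] := prediction_outcome_bounded x w.
have := smCE_ge (g := fun=> 0) p01 xp1.
rewrite big1 => [|t _]; last by rewrite mul0r.
by apply; split=> [u v _ _|u _]; rewrite ?subrr normr0.
Qed.

Lemma witness_gain_le_smCE T (x : {ffun 'I_T -> bool}) w :
  witness_gain (alg w) T (codom x) <= smCE (outcome R x) (prediction alg x w).
Proof.
have [p01 xp1] := prediction_outcome_bounded x w.
have := smCE_ge (g := fun u => 2^-1 - u) p01 xp1.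
rewrite /witness_gain big_mkord.
under eq_bigr => t _ do rewrite outcome_bit prediction_forecast.
apply; split=> [u v _ _|u /andP[u0 u1]] /=; last by rewrite ler_norml; apply/andP; split; lra.
have -> : 2^-1 - u - (2^-1 - v) = v - u by ring.
by rewrite distrC.
Qed.

Definition large_bias_event T (x : {ffun 'I_T -> bool}) (del : R) : set Omega :=
  [set w | exists t : 'I_T, del <= `|partial_bias (outcome R x) (prediction alg x w) t|].

Lemma large_bias_eventE T (x : {ffun 'I_T -> bool}) del :
  large_bias_event x del = [set w | ~~ unstopped (alg w) del (codom x) T].
Proof.
apply/seteqP; split => w /=.
  case=> t; rewrite partial_bias_bias => tdel; apply/allPn; exists (val t).
    by rewrite mem_iota /=.
  by rewrite -leNgt.
case/allPn => t; rewrite mem_iota add0n /= => tT; rewrite -leNgt => tdel.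
by exists (Ordinal tT); rewrite partial_bias_bias.
Qed.

Lemma natr_unstopped T (x : {ffun 'I_T -> bool}) del w :
  (unstopped (alg w) del (codom x) T)%:R = 1 - \1_(large_bias_event x del) w :> R.
Proof.
rewrite large_bias_eventE indicE.
have [u|u] := boolP (unstopped (alg w) del (codom x) T).
  by rewrite memNset /= ?subr0 // u.
by rewrite mem_set /= ?subrr.
Qed.

(* A measurable minorant of smCE, which itself need not be measurable. *)
Definition pos_witness_gain T (x : {ffun 'I_T -> bool}) w : R :=
  Num.max (witness_gain (alg w) T (codom x)) 0.

Lemma pointwise_tradeoff T (del : R) n L w : 0 <= del -> (n * L <= T)%N ->
  n%:R * (L%:R / 4 - 8 * (del + 1) ^+ 2) * (2 ^ T)%:R <=
  \sum_(x : {ffun 'I_T -> bool})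
     (2 * L%:R * pos_witness_gain x w + n%:R * L%:R / 4 * \1_(large_bias_event x del) w).
Proof.
move=> del0 nLT; have := unstopped_witness_tradeoff (alg01 w) del0 nLT.
under eq_bigr => x _ do rewrite natr_unstopped.
rewrite sumrB sumr_const card_bool_cube big_split /= -!mulr_sumr.
have : \sum_(x : {ffun 'I_T -> bool}) witness_gain (alg w) T (codom x) <=
       \sum_(x : {ffun 'I_T -> bool}) pos_witness_gain x w.
  by apply: ler_sum => x _; rewrite le_max lexx.
move/(ler_wpM2l (_ : 0 <= 2 * L%:R)); rewrite mulr_ge0 //; lra.
Qed.

End RandomForecaster.

Lemma measurable_all d (Omega : measurableType d) (r : seq nat) (F : nat -> Omega -> bool) :
  (forall i, measurable_fun setT (F i)) -> measurable_fun setT (fun w => all (F ^~ w) r).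
Proof.
move=> mF; elim: r => [|i r IH] /=; first exact: measurable_cst.
exact: measurable_and.
Qed.

Section Measurability.
Context d (Omega : measurableType d) (R : realType) (alg : Omega -> seq bool -> R).
Hypothesis alg_meas : forall s, measurable_fun setT (fun w => alg w s).

Lemma measurable_forecast s t : measurable_fun setT (fun w => forecast (alg w) s t).
Proof. exact: alg_meas. Qed.

Lemma measurable_residual s t : measurable_fun setT (fun w => residual (alg w) s t).
Proof. by apply: measurable_funB; [exact: measurable_cst | exact: measurable_forecast]. Qed.

Lemma measurable_bias s j : measurable_fun setT (fun w => bias (alg w) s j).
Proof. by apply: measurable_sum => t; exact: measurable_residual. Qed.

Lemma measurable_witness_gain T s :
  measurable_fun setT (fun w => witness_gain (alg w) T s).
Proof.
apply: measurable_sum => t; apply: measurable_funM; last exact: measurable_residual.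
by apply: measurable_funB; [exact: measurable_cst | exact: measurable_forecast].
Qed.

Lemma measurable_unstopped del s t :
  measurable_fun setT (fun w => unstopped (alg w) del s t).
Proof.
apply: (@measurable_all _ _ _ (fun j w => `|bias (alg w) s j.+1| < del)) => j.
apply: measurable_fun_ltr; last exact: measurable_cst.
by apply: measurableT_comp; [exact: normr_measurable | exact: measurable_bias].
Qed.

Lemma measurable_large_bias_event T (x : {ffun 'I_T -> bool}) del :
  measurable (large_bias_event alg x del).
Proof.
rewrite large_bias_eventE -[X in measurable X]setTI.
exact: (measurable_neg (measurable_unstopped _ _ _)).
Qed.

End Measurability.

Section NonmeasurableIntegral.
Local Open Scope ereal_scope.

(* The integral of a nonnegative function is a supremum over its simple minorants. *)
Lemma ge0_le_integral_nomeas d (T : measurableType d) (R : realType)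
    (mu : {measure set T -> \bar R}) (f g : T -> \bar R) :
  (forall x, 0 <= f x) -> (forall x, f x <= g x) -> \int[mu]_x f x <= \int[mu]_x g x.
Proof.
move=> f0 fg; have g0 x : 0 <= g x by exact: le_trans (fg x).
rewrite /integral /=.
have -> : ([eta f] \_ [set: T])^\- = ([eta g] \_ [set: T])^\-.
  apply/funext => x; rewrite !funenegE /patch /= in_setT.
  by rewrite !max_r // oppe_le0.
apply: leeB => //; apply: le_ereal_sup => _ [h hf <-]; exists h => // x.
apply: le_trans (hf x) _; rewrite !funeposE /patch in_setT.
by apply: le_max2 => //; exact: fg.
Qed.

End NonmeasurableIntegral.

Section ExpectedTradeoff.
Context d (Omega : measurableType d) (R : realType) (P : probability Omega R)
  (alg : Omega -> seq bool -> R).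
Hypotheses (alg_meas : forall s, measurable_fun setT (fun w => alg w s))
  (alg01 : forall w s, 0 <= alg w s <= 1).

Lemma integral_gain_indic T (x : {ffun 'I_T -> bool}) (del A B : R) :
  0 <= A -> 0 <= B ->
  (\int[P]_w (A * pos_witness_gain alg x w + B * \1_(large_bias_event alg x del) w)%:E =
   A%:E * \int[P]_w (pos_witness_gain alg x w)%:E + B%:E * P (large_bias_event alg x del))%E.
Proof.
move=> A0 B0; have mB := measurable_large_bias_event alg_meas x del.
have gain_ge0 w : 0 <= pos_witness_gain alg x w by rewrite le_max lexx orbT.
have m_gain : measurable_fun setT (fun w => (pos_witness_gain alg x w)%:E).
  apply/measurable_EFinP/measurable_maxr; last exact: measurable_cst.
  exact: measurable_witness_gain.
have m_indic : measurable_fun setT (fun w => (\1_(large_bias_event alg x del) w : R)%:E).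
  exact/measurable_EFinP/measurable_indic.
under eq_integral => w _ do rewrite EFinD !EFinM.
rewrite ge0_integralD //; last 4 first.
- by move=> w _; rewrite mule_ge0 ?lee_fin.
- exact: measurable_funeM.
- by move=> w _; rewrite mule_ge0 ?lee_fin.
- exact: measurable_funeM.
rewrite !ge0_integralZl_EFin //; last by move=> w _; rewrite lee_fin.
by rewrite integral_indic // setIT.
Qed.

Lemma integral_smCE_ge0 T (x : {ffun 'I_T -> bool}) :
  (0 <= \int[P]_w (smCE (outcome R x) (prediction alg x w))%:E)%E.
Proof. by apply: integral_ge0 => w _; rewrite lee_fin smCE_ge0. Qed.

Lemma expected_tradeoff T (del : R) n L : 0 <= del -> (n * L <= T)%N ->
  ((n%:R * (L%:R / 4 - 8 * (del + 1) ^+ 2) * (2 ^ T)%:R)%:E <=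
   (2 * L%:R)%:E * \sum_(x : {ffun 'I_T -> bool})
                     \int[P]_w (smCE (outcome R x) (prediction alg x w))%:E +
   (n%:R * L%:R / 4)%:E * \sum_(x : {ffun 'I_T -> bool}) P (large_bias_event alg x del))%E.
Proof.
move=> del0 nLT; set K := (_ * _ * _)%R.
set A := (2 * L%:R)%R; set B := (n%:R * L%:R / 4)%R.
have A0 : 0 <= A by rewrite mulr_ge0.
have B0 : 0 <= B by rewrite !mulr_ge0.
(* ge0_le_integral_nomeas below needs the constant K to be nonnegative. *)
have [K_le0|K_gt0] := leP K 0.
  apply: (@le_trans _ _ 0%E); first by rewrite lee_fin.
  by rewrite adde_ge0 // mule_ge0 ?lee_fin // sume_ge0 // => x _; exact: integral_smCE_ge0.
pose g (x : {ffun 'I_T -> bool}) w :=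
  A * pos_witness_gain alg x w + B * \1_(large_bias_event alg x del) w.
have g_ge0 x w : 0 <= g x w.
  by rewrite addr_ge0 // mulr_ge0 // ?le_max ?lexx ?orbT // indicE ler0n.
have m_g x : measurable_fun setT (fun w => (g x w)%:E).
  apply/measurable_EFinP/measurable_funD; apply: measurable_funM => //.
    by apply: measurable_maxr => //; exact: measurable_witness_gain.
  exact/measurable_indic/measurable_large_bias_event.
have -> : K%:E = (\int[P]_w K%:E)%E.
  by rewrite integral_cst // -[LHS]mule1; congr (_ * _)%E; exact/esym/probability_setT.
apply: (@le_trans _ _ (\int[P]_w (\sum_(x : {ffun 'I_T -> bool}) g x w)%:E)%E).
  apply: ge0_le_integral_nomeas => w; rewrite lee_fin; first exact: ltW.
  exact: pointwise_tradeoff.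
under eq_integral => w _ do rewrite -sumEFin.
rewrite ge0_integral_sum // => [|x w _]; last by rewrite lee_fin.
under eq_bigr => x _ do rewrite integral_gain_indic //.
rewrite big_split /= -!ge0_sume_distrr //; last first.
  by move=> x _; apply: integral_ge0 => w _; rewrite lee_fin le_max lexx orbT.
apply: leeD => //; apply: lee_wpmul2l; first by rewrite lee_fin.
apply: lee_sum => x _; apply: ge0_le_integral_nomeas => w; rewrite lee_fin ?le_max ?lexx ?orbT //.
by rewrite ge_max witness_gain_le_smCE ?smCE_ge0.
Qed.

End ExpectedTradeoff.

Lemma lee_dichotomy (R : realType) (A B N K c g : R) (X Y : \bar R) :
  0 < A -> 0 <= B -> 0 < N -> (0 <= X)%E -> (0 <= Y)%E ->
  (K%:E <= A%:E * X + B%:E * Y)%E -> (A * g + B * c) * N <= K ->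
  (c%:E <= N^-1%:E * Y)%E \/ (g%:E <= N^-1%:E * X)%E.
Proof.
move=> A0 B0 N0 X0 Y0 hK hg.
have [cY|Yc] := leP c%:E (N^-1%:E * Y)%E; [by left | right].
case: X X0 hK => [x| |] // x0; last by move=> _; rewrite mulry gtr0_sg ?invr_gt0 // mul1e leey.
case: Y Y0 Yc => [y| |] // y0; last by rewrite mulry gtr0_sg ?invr_gt0 // mul1e ltNge leey.
rewrite -!EFinM -EFinD !lee_fin lte_fin => yc hK.
have By : B * y <= B * (c * N).
  by rewrite ler_wpM2l // ltW // -ltr_pdivrMr // mulrC.
by rewrite mulrC ler_pdivlMr // -(ler_pM2l A0); lra.
Qed.

Lemma block_budget (R : realFieldType) (r n L : R) :
  32 <= r -> n <= r -> r < n + 1 -> r ^+ 3 < (L + 1) * n -> 0 <= L ->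
  2 * L * (32^-1 * r) + n * L / 4 * 32^-1 <= n * (L / 4 - 8 * (32^-1 * r + 1) ^+ 2).
Proof.
move=> r32 nr rn r3 L0.
have n31 : 31 <= n by lra.
have r_sqr : r ^+ 2 < L + 1.
  have : r * r ^+ 2 < r * (L + 1).
    by rewrite -exprS; apply: lt_le_trans r3 _; rewrite mulrC ler_wpM2r //; lra.
  by rewrite ltr_pM2l //; lra.
have L1 : 1 <= L by nra.
have del_sqr : 8 * (32^-1 * r + 1) ^+ 2 <= (L + 1) / 32.
  have : 0 <= 32^-1 * r + 1 <= r / 16 by apply/andP; split; lra.
  by case/andP=> h0 h1; nra.
have := ler_wpM2l (ltW (lt_le_trans _ n31)) del_sqr.
have : L * r <= L * (n + 1) by rewrite ler_wpM2l //; lra.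
have : 31 * L <= n * L by rewrite ler_wpM2r //; lra.
have : n <= n * L by rewrite ler_peMr //; lra.
lra.
Qed.

Lemma cube_root_blocks (R : realType) T (r : R) :
  (2 ^ 15 <= T)%N -> 0 <= r -> r ^+ 3 = T%:R ->
  32 <= r /\ exists n L : nat,
    [/\ (0 < L)%N, (n * L <= T)%N, n%:R <= r, r < n%:R + 1 & r ^+ 3 < (L%:R + 1) * n%:R].
Proof.
move=> T_large r0 r3.
have r32 : 32 <= r.
  rewrite leNgt; apply/negP => r_small.
  have : r ^+ 3 < 32 ^+ 3 by rewrite ltrXn2r.
  by rewrite r3 -natrX ltr_nat ltnNge (leq_trans _ T_large).
split=> //; have /andP[nr rn] := truncn_itv r0; set n := Num.truncn r in nr rn.
have n0 : (0 < n)%N by rewrite truncn_gt0; lra.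
have nT : (n <= T)%N.
  rewrite -(ler_nat R) -r3; apply: le_trans nr _.
  by rewrite -[r in r <= _]expr1 ler_eXn2l //; lra.
exists n, (T %/ n)%N; split.
- by rewrite divn_gt0.
- by rewrite mulnC leq_trunc_div.
- exact: nr.
- by rewrite natr1.
- by rewrite r3 natr1 -natrM ltr_nat ltn_ceil.
Qed.

Lemma powR_inv3K (R : realType) (x : R) : 0 <= x -> (x `^ 3%:R^-1) ^+ 3 = x.
Proof. by move=> x0; rewrite -powR_mulrn ?powR_ge0 // -powRrM mulVf ?pnatr_eq0 // powRr1. Qed.

Theorem lemma12 (R : realType) :
  exists c : R, 0 < c /\
  exists T0 : nat, forall T : nat, (T0 <= T)%N ->
  forall (d : measure_display) (Omega : measurableType d)
         (P : probability Omega R) (alg : Omega -> seq bool -> R),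
  (forall s : seq bool, measurable_fun setT (fun w => alg w s)) ->
  (forall (w : Omega) (s : seq bool), 0 <= alg w s <= 1) ->
  ((((2 ^ T)%:R : R)^-1)%:E *
     \sum_(x : {ffun 'I_T -> bool})
        P [set w | exists t : 'I_T,
                 (c * (T%:R `^ (3%:R^-1)) <=
                 `| partial_bias (outcome R x) (prediction alg x w) t | )%R]
     >= c%:E)%E
  \/
  ((((2 ^ T)%:R : R)^-1)%:E *
     \sum_(x : {ffun 'I_T -> bool})
        \int[P]_w (smCE (outcome R x) (prediction alg x w))%:E
     >= (c * (T%:R `^ (3%:R^-1)))%R%:E)%E.
Proof.
exists 32^-1; split; first by rewrite invr_gt0.
exists (2 ^ 15)%N => T T_large d Omega P alg alg_meas alg01.
set r := T%:R `^ 3%:R^-1.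
have r0 : 0 <= r by exact: powR_ge0.
have [r32 [n [L [L0 nLT nr rn r3]]]] := cube_root_blocks T_large r0 (powR_inv3K (ler0n _ T)).
apply: lee_dichotomy (expected_tradeoff P alg_meas alg01 _ nLT) _.
- by rewrite mulr_gt0 ?ltr0n.
- by rewrite !mulr_ge0.
- by rewrite ltr0n expn_gt0.
- by rewrite sume_ge0 // => x _; exact: integral_smCE_ge0.
- by rewrite sume_ge0.
- by rewrite mulr_ge0 // invr_ge0.
- by rewrite ler_pM2r ?ltr0n ?expn_gt0 //; apply: block_budget.
Qed.
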